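(* Let $\mu$ be a partition of $n$, let $T$ be a row-strict filling of $\mu$, and write $\Phi(T)=x_2^{\alpha_2}\cdots x_n^{\alpha_n}$. For each $i\in\{2,\dots,n\}$, the shape $\mu^{(i)}$ of the subfilling $T^{(i)}$ has at least $\alpha_i+1$ nonzero rows.
   Context: A partition $\mu=(\mu_1\ge\cdots\ge\mu_s>0)$ of $n$ is drawn as a Young diagram with $\mu_k$ boxes in row $k$ (rows top to bottom, left-justified). A filling places $1,\dots,n$ bijectively in the boxes; it is row-strict if entries increase left to right along rows. $T^{(i)}$ is obtained from $T$ by deleting the boxes containing $i+1,\dots,n$; its shape is $\mu^{(i)}$. Dimension pairs (with $h(j)=j$): $(a,b)$ is a dimension pair of $T$ if (1) $b>a$; (2) $b$ is in the same column as $a$ strictly below it, or in a column strictly left of $a$'s column; (3) if a box immediately right of $a$ exists and contains $c$, then $b\le c$. $D^T_j$ is the set of dimension pairs $(a,j)$, and $\Phi(T)=\prod_{j=2}^n x_j^{|D^T_j|}\in\mathbb{Z}[x_1,\dots,x_n]$. *)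

From mathcomp Require Import all_boot.
Set Implicit Arguments. Unset Strict Implicit. Unset Printing Implicit Defensive.

Definition is_partition (n : nat) (mu : seq nat) : bool :=
  [&& sorted geq mu, all (fun k => 0 < k) mu & sumn mu == n].

(* A filling is a list of rows (row 0 = top row), each row a list of entries
   read left to right.  Box (r, c) = row r, column c (0-indexed). *)
Definition filling := seq (seq nat).

Definition fshape (T : filling) : seq nat := map size T.

Definition is_filling (n : nat) (mu : seq nat) (T : filling) : bool :=
  (fshape T == mu) && perm_eq (flatten T) (iota 1 n).

Definition row_strict (T : filling) : bool := all (sorted ltn) T.

Definition rowlen (T : filling) (r : nat) : nat := size (nth [::] T r).
Definition entry (T : filling) (r c : nat) : nat := nth 0 (nth [::] T r) c.

(* (a, b) is a dimension pair of T (with h(j) = j). *)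
Definition dimpair (T : filling) (a b : nat) : bool :=
  (a < b) &&
  has (fun ra => has (fun ca =>
     (entry T ra ca == a) &&
     has (fun rb => has (fun cb =>
        [&& entry T rb cb == b,
            ((cb == ca) && (ra < rb)) || (cb < ca)
          & (ca.+1 < rowlen T ra) ==> (b <= entry T ra ca.+1)])
       (iota 0 (rowlen T rb))) (iota 0 (size T)))
     (iota 0 (rowlen T ra))) (iota 0 (size T)).

(* |D^T_j| = number of dimension pairs (a, j); this is the exponent of x_j in Phi(T). *)
Definition alpha (T : filling) (j : nat) : nat :=
  count (fun a => dimpair T a j) (iota 0 j).

Definition subfilling (T : filling) (i : nat) : filling :=
  map (filter (fun x => x <= i)) T.

Definition nonzero_rows (s : seq nat) : nat := count (fun k => k != 0) s.

(* Send each dimension pair (a, i) to the row of a, and i itself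
   to its own row.  All these rows contain an entry at most i, so they are
   nonzero rows of T^(i).  The map is injective: a lies in a row different
   from that of i, since otherwise i would sit strictly left of a in a
   strictly increasing row although a < i; and two pairs (a, i), (a', i) with
   a, a' in one row, a left of a', are impossible, since condition (3) for a
   gives i <= (entry right of a) <= a' < i. *)
From mathcomp Require Import all_boot.
Set Implicit Arguments. Unset Strict Implicit.

Definition row_of (T : filling) (x : nat) : nat := find (fun row => x \in row) T.

Lemma entry_mem_row (T : filling) r c : c < rowlen T r -> entry T r c \in nth [::] T r.
Proof. exact: mem_nth. Qed.

Lemma entry_mem_flatten (T : filling) r c :
  r < size T -> c < rowlen T r -> entry T r c \in flatten T.
Proof. by move=> hr hc; apply/flattenP; exists (nth [::] T r); [exact: mem_nth | exact: mem_nth]. Qed.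

Lemma row_of_mem (T : filling) x :
  x \in flatten T -> row_of T x < size T /\ x \in nth [::] T (row_of T x).
Proof.
move=> /flattenP[s sT xs].
have hasT : has (fun row => x \in row) T by apply/hasP; exists s.
by split; [rewrite /row_of -has_find | exact: (nth_find [::] hasT)].
Qed.

Lemma row_ofE (T : filling) r x : uniq (flatten T) ->
  r < size T -> x \in nth [::] T r -> row_of T x = r.
Proof.
rewrite /row_of; elim: T r => [|s T IH] r //=; rewrite cat_uniq => /and3P[_ disj uT].
case: r => [|r] /= hr xr; first by rewrite xr.
have xNs : x \notin s.
  apply: contraNN disj => xs; apply/hasP; exists x => //.
  by apply/flattenP; exists (nth [::] T r); first exact: mem_nth.
by rewrite (negPf xNs) (IH r).
Qed.

Lemma dimpairP (T : filling) a b : dimpair T a b -> exists ra ca rb cb,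
  [/\ a < b, ra < size T, ca < rowlen T ra, entry T ra ca = a & rb < size T] /\
  [/\ cb < rowlen T rb, entry T rb cb = b,
      ((cb == ca) && (ra < rb)) || (cb < ca)
    & ca.+1 < rowlen T ra -> b <= entry T ra ca.+1].
Proof.
case/andP=> ab /hasP[ra]; rewrite mem_iota => /andP[_ hra] /hasP[ca].
rewrite mem_iota => /andP[_ hca] /andP[/eqP ea] /hasP[rb]; rewrite mem_iota => /andP[_ hrb].
case/hasP=> cb; rewrite mem_iota => /andP[_ hcb] /and3P[/eqP eb pos /implyP right].
by exists ra, ca, rb, cb.
Qed.

Lemma sorted_ltn_nth_succ (s : seq nat) c c' : sorted ltn s ->
  c < c' -> c' < size s -> nth 0 s c.+1 <= nth 0 s c'.
Proof.
move=> s_lt cc' hc'; have s_le : sorted leq s by apply: sub_sorted s_lt => x y /ltnW.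
apply: (sorted_leq_nth leq_trans leqnn) => //; rewrite inE //.
exact: leq_ltn_trans cc' hc'.
Qed.

Definition rows_below (T : filling) (i : nat) : seq nat :=
  [seq r <- iota 0 (size T) | has (fun x => x <= i) (nth [::] T r)].

Lemma nonzero_rows_subfilling (T : filling) i :
  nonzero_rows (fshape (subfilling T i)) = size (rows_below T i).
Proof.
rewrite /nonzero_rows /fshape /subfilling size_filter -{1}(mkseq_nth [::] T).
by rewrite /mkseq !count_map; apply: eq_count => r /=; rewrite size_filter has_count lt0n.
Qed.

Lemma row_of_rows_below (T : filling) i x :
  x \in flatten T -> x <= i -> row_of T x \in rows_below T i.
Proof.
move=> /row_of_mem[hr xr] xi; rewrite mem_filter mem_iota leq0n add0n hr !andbT.
by apply/hasP; exists x.
Qed.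

Section DimensionPairs.

Variables (T : filling) (i : nat).
Hypotheses (uniqT : uniq (flatten T)) (rowsT : row_strict T).

Let sorted_row r : r < size T -> sorted ltn (nth [::] T r).
Proof. by move=> hr; apply: (allP rowsT); exact: mem_nth. Qed.

Lemma dimpair_row_of a : dimpair T a i -> exists c,
  [/\ row_of T a < size T, c < rowlen T (row_of T a), entry T (row_of T a) c = a
    & c.+1 < rowlen T (row_of T a) -> i <= entry T (row_of T a) c.+1].
Proof.
case/dimpairP=> [ra [ca [rb [cb [[_ hra hca ea _] [_ _ _ right]]]]]].
have -> : row_of T a = ra by apply: row_ofE => //; rewrite -ea entry_mem_row.
by exists ca.
Qed.

Lemma dimpair_row_of_neq a : dimpair T a i -> row_of T a != row_of T i.
Proof.
case/dimpairP=> [ra [ca [rb [cb [[ai hra hca ea hrb] [hcb eb pos _]]]]]].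
have -> : row_of T a = ra by apply: row_ofE => //; rewrite -ea entry_mem_row.
have -> : row_of T i = rb by apply: row_ofE => //; rewrite -eb entry_mem_row.
apply/eqP=> eq_r; subst rb; rewrite ltnn andbF /= in pos.
have := sorted_ltn_nth ltn_trans 0 (sorted_row hra) cb ca.
rewrite !inE hcb hca => /(_ isT isT pos).
by rewrite -[nth _ _ cb]/(entry T ra cb) -[nth _ _ ca]/(entry T ra ca) ea eb ltnNge ltnW.
Qed.

Lemma dimpair_row_of_inj : {in [pred a | dimpair T a i] &, injective (row_of T)}.
Proof.
move=> a a'; rewrite !inE => pa pa' e.
have /andP[ai _] := pa; have /andP[a'i _] := pa'.
have [c [hr hc ea right]] := dimpair_row_of pa.
have [c' [_ hc' ea' right']] := dimpair_row_of pa'; rewrite -e in hc' ea' right'.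
set r := row_of T a in hr hc ea right hc' ea' right'.
have not_left x y b : y < x -> x < rowlen T r -> entry T r x = b -> b < i ->
    (y.+1 < rowlen T r -> i <= entry T r y.+1) -> False.
  move=> yx hx eb bi /(_ (leq_ltn_trans yx hx)) iy.
  have := leq_trans iy (sorted_ltn_nth_succ (sorted_row hr) yx hx).
  by rewrite -[nth _ _ x]/(entry T r x) eb leqNgt bi.
case: (ltngtP c c') => [lt | lt | eq_c]; first by case: (not_left c' c a').
  by case: (not_left c c' a).
by rewrite -ea -ea' eq_c.
Qed.

End DimensionPairs.

Theorem mainTheorem4 (n : nat) (mu : seq nat) (T : filling) (i : nat) :
  is_partition n mu -> is_filling n mu T -> row_strict T ->
  2 <= i <= n ->
  alpha T i + 1 <= nonzero_rows (fshape (subfilling T i)).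
Proof.
move=> _ /andP[_ permT] rowsT /andP[i2 iN].
have uniqT : uniq (flatten T) by rewrite (perm_uniq permT) iota_uniq.
have iT : i \in flatten T by rewrite (perm_mem permT) mem_iota (leq_trans _ i2).
set A := [seq a <- iota 0 i | dimpair T a i].
have pairA : {subset A <= [pred a | dimpair T a i]}.
  by move=> a; rewrite mem_filter => /andP[].
have -> : alpha T i + 1 = size (map (row_of T) (i :: A)).
  by rewrite size_map /= size_filter addn1.
rewrite nonzero_rows_subfilling; apply: uniq_leq_size => /=.
  rewrite (map_inj_in_uniq (sub_in2 pairA (dimpair_row_of_inj uniqT rowsT))).
  rewrite filter_uniq ?iota_uniq // andbT; apply/mapP=> -[a /pairA pa].
  by apply/eqP; rewrite eq_sym dimpair_row_of_neq.
move=> r; rewrite inE => /predU1P[-> | /mapP[a /pairA pa ->]].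
  exact: row_of_rows_below.
have [c [hr hc ea _]] := dimpair_row_of uniqT pa.
apply: row_of_rows_below; last by case/andP: pa => /ltnW.
by rewrite -ea entry_mem_flatten.
Qed.
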